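(* Let $q$ be an odd prime power, let $f$ be a planar function on $\mathbb F_{q^2}$ and let $\theta=\theta_0+\theta_1\xi\in\mathbb F_{q^2}^*$ ($\theta_0,\theta_1\in\mathbb F_q$). Assume that for every $c\in\mathbb F_q$, \[\#\{x\in\mathbb F_{q^2}:\theta_1 f_0(x)-\theta_0 f_1(x)=c\}=\begin{cases} q+1, & c\neq 0,\\ 1, & c=0.\end{cases}\] Then the set \[\mathcal U_\theta:=\{(x,t\theta):x\in\mathbb F_{q^2},\ t\in\mathbb F_q\}\cup\{(\infty)\}\] is a unital in $\Pi(f)$. Furthermore, for $a,b\in\mathbb F_{q^2}$ with $b=b_0+b_1\xi$ ($b_0,b_1\in\mathbb F_q$), the line $L_{a,b}$ is a tangent line to $\mathcal U_\theta$ if and only if $b_0\theta_1-b_1\theta_0=0$.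
   Context: A function $f:\mathbb F_{q^2}\to\mathbb F_{q^2}$ is planar if for every $a\neq 0$ the map $x\mapsto f(x+a)-f(x)$ is a bijection. For planar $f$, $\Pi(f)$ is the projective plane with points $(x,y)\in\mathbb F_{q^2}^2$ and $(a)$ for $a\in\mathbb F_{q^2}\cup\{\infty\}$, and lines $L_{a,b}=\{(x,f(x+a)-b):x\in\mathbb F_{q^2}\}\cup\{(a)\}$ ($a,b\in\mathbb F_{q^2}$), $N_a=\{(a,y):y\in\mathbb F_{q^2}\}\cup\{(\infty)\}$ ($a\in\mathbb F_{q^2}$), $L_\infty=\{(a):a\in\mathbb F_{q^2}\cup\{\infty\}\}$, with incidence given by membership. A unital in $\Pi(f)$ is a set of $q^3+1$ points meeting every line in exactly $1$ or $q+1$ points; a line meeting it in exactly one point is a tangent line. A fixed element $\xi\in\mathbb F_{q^2}\setminus\mathbb F_q$ is chosen; every $x\in\mathbb F_{q^2}$ is written uniquely as $x=x_0+x_1\xi$ with $x_0,x_1\in\mathbb F_q$, and $f(x)=f_0(x)+f_1(x)\xi$ with $f_0,f_1:\mathbb F_{q^2}\to\mathbb F_q$. *)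

From mathcomp Require Import all_boot all_order all_algebra all_field.
Set Implicit Arguments. Unset Strict Implicit. Unset Printing Implicit Defensive.
Import GRing.Theory.
Local Open Scope ring_scope.

(* F plays the role of F_{q^2}; the subfield F_q is the set of x with x^q = x. *)
Definition subFq (q : nat) (F : finFieldType) : {set F} := [set x : F | x ^+ q == x].

Definition planar (F : finFieldType) (f : F -> F) : Prop :=
  forall a : F, a != 0 -> bijective (fun x => f (x + a) - f x).

(* Points of Pi(f): inl (x,y) is the affine point (x,y);
   inr (Some a) is the point (a), inr None is the point (infinity). *)
Definition point (F : finFieldType) := ((F * F) + option F)%type.
(* Lines of Pi(f): inl (a,b) is L_{a,b}; inr (Some a) is N_a; inr None is L_infinity. *)
Definition line (F : finFieldType) := ((F * F) + option F)%type.

Definition incident (F : finFieldType) (f : F -> F) (P : point F) (l : line F) : bool :=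
  match l, P with
  | inl (a, b), inl (x, y) => y == f (x + a) - b
  | inl (a, b), inr (Some c) => c == a
  | inl _, inr None => false
  | inr (Some a), inl (x, _) => x == a
  | inr (Some _), inr (Some _) => false
  | inr (Some _), inr None => true
  | inr None, inl _ => false
  | inr None, inr _ => true
  end.

Definition meet (F : finFieldType) (f : F -> F) (U : {set point F}) (l : line F) : {set point F} :=
  [set P in U | incident f P l].

Definition is_unital (F : finFieldType) (f : F -> F) (q : nat) (U : {set point F}) : Prop :=
  #|U| = (q ^ 3).+1 /\
  forall l : line F, #|meet f U l| = 1%N \/ #|meet f U l| = q.+1.

Definition tangent (F : finFieldType) (f : F -> F) (U : {set point F}) (l : line F) : Prop :=
  #|meet f U l| = 1%N.

Definition U_theta (F : finFieldType) (q : nat) (theta : F) : {set point F} :=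
  [set P : point F | match P with
                     | inl (x, y) => [exists t in subFq q F, y == t * theta]
                     | inr None => true
                     | inr (Some _) => false
                     end].

(* Write y = y0 + y1 xi with y0, y1 in F_q.  Then y lies on the F_q-line through theta
   iff the determinant theta1 y0 - theta0 y1 vanishes, so the affine points of U_theta
   on L_{a,b} correspond to the x with theta1 f0(x) - theta0 f1(x) = theta1 b0 - theta0 b1:
   a fibre of the counting hypothesis, of size q+1 or 1 (tangency).  The lines N_a meet
   U_theta in q+1 points and L_infinity only in (infinity).  Summing the fibre sizes over
   F_q also shows that F_q has exactly q elements, whence #|U_theta| = q^3 + 1. *)

From HB Require Import structures.
From mathcomp Require Import all_boot all_order all_algebra all_field.
From mathcomp Require Import zify ring.
Set Implicit Arguments.
Unset Strict Implicit.
Import GRing.Theory.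
Local Open Scope ring_scope.

Lemma card_fibres_square (aT rT : finType) (g : aT -> rT) (S : {set rT}) c0 n :
  c0 \in S -> (forall x, g x \in S) ->
  (forall c, c \in S -> #|[set x | g x == c]| = if c != c0 then n.+1 else 1%N) ->
  #|aT| = (n ^ 2)%N -> #|S| = n.
Proof.
move=> Sc0 gS fibre cardT.
have partT : #|aT| = (\sum_(c in S) #|[set x | g x == c]|)%N.
  rewrite -sum1_card (partition_big g (mem S)) //=.
  by apply: eq_bigr => c _; rewrite -sum1_card; apply: eq_bigl => x; rewrite inE.
rewrite (eq_bigr _ fibre) (big_setD1 c0) //= eqxx in partT.
rewrite (eq_bigr (fun _ => n.+1)) ?sum_nat_const in partT; last first.
  by move=> c; rewrite !inE => /andP[->].
(* [1 + (#|S| - 1) * n.+1 = n ^ 2] forces [#|S| - 1 = n - 1]. *)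
move: partT; rewrite cardT (cardsD1 c0 S) Sc0 /=; nia.
Qed.

Section UnitalMeets.

Variables (q : nat) (F : finFieldType) (f : F -> F) (theta : F).
Local Notation K := (subFq q F).
Local Notation U := (U_theta q theta).

Lemma meet_U_theta_infinity : meet f U (inr None) = [set inr None].
Proof. by apply/setP => -[[x y]|[c|]]; rewrite !inE ?andbF. Qed.

Lemma card_meet_U_theta_affine a b :
  #|meet f U (inl (a, b))| = #|[set x | [exists t in K, f x - b == t * theta]]|.
Proof.
pose pt x : point F := inl (x - a, f x - b).
have pt_inj : injective pt by move=> x1 x2 [/addIr].
suff -> : meet f U (inl (a, b)) = pt @: [set x | [exists t in K, f x - b == t * theta]].
  exact: card_imset.
apply/setP => -[[x y]|[c|]]; rewrite !inE /=.
- apply/andP/imsetP => [[yU /eqP yE]|[x' x'U [-> ->]]].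
    by exists (x + a); rewrite ?inE /pt ?addrK -yE.
  by rewrite subrK eqxx; rewrite inE in x'U.
- by apply/esym/imsetP => -[].
- by apply/esym/imsetP => -[].
Qed.

Hypothesis theta_neq0 : theta != 0.

Lemma card_U_theta : #|U| = (#|F| * #|K|).+1.
Proof.
pose pt (u : F * F) : point F := inl (u.1, u.2 * theta).
have pt_inj : injective pt.
  by move=> [x1 t1] [x2 t2] [/= -> /(mulIf theta_neq0) ->].
have -> : U = inr None |: pt @: setX [set: F] K.
  apply/setP => -[[x y]|[c|]]; rewrite !inE //=.
    apply/existsP/imsetP => [[t /andP[tK /eqP ->]]|[[x' t] xtK [_ ->]]].
      by exists (x, t); rewrite // in_setX inE.
    by exists t; rewrite eqxx andbT; rewrite in_setX in xtK; case/andP: xtK.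
  by apply/esym/imsetP => -[].
rewrite cardsU1 (card_imset _ pt_inj) cardsX cardsT.
by have /negPf -> : inr None \notin pt @: setX [set: F] K by apply/imsetP => -[].
Qed.

Lemma card_meet_U_theta_vertical a : #|meet f U (inr (Some a))| = #|K|.+1.
Proof.
pose pt t : point F := inl (a, t * theta).
have pt_inj : injective pt by move=> t1 t2 [/(mulIf theta_neq0)].
have -> : meet f U (inr (Some a)) = inr None |: pt @: K.
  apply/setP => -[[x y]|[c|]]; rewrite !inE //=.
    apply/andP/imsetP => [[/existsP[t /andP[tK /eqP ->]] /eqP ->]|[t tK [-> ->]]].
      by exists t.
    by split=> //; apply/existsP; exists t; rewrite tK eqxx.
  by apply/esym/imsetP => -[].
rewrite cardsU1 (card_imset _ pt_inj).
by have /negPf -> : inr None \notin pt @: K by apply/imsetP => -[].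
Qed.

End UnitalMeets.

Section FixedSubfield.

Variables (q : nat) (F : finFieldType).
Hypothesis pcharq : [pchar F].-nat q.
Local Notation K := (subFq q F).

Lemma subFq_divring_closed : divring_closed K.
Proof.
have exprB (x y : F) : (x - y) ^+ q = x ^+ q - y ^+ q.
  by rewrite exprDn_pchar // exprNn_pchar.
split; rewrite ?inE ?expr1n // => x y; rewrite !inE => /eqP xq /eqP yq.
  by rewrite exprB xq yq.
by rewrite exprMn exprVn xq yq.
Qed.

HB.instance Definition _ :=
  GRing.isDivringClosed.Build F (pred_of_set K) subFq_divring_closed.

Variable xi : F.
Hypothesis xi_notin : xi \notin K.

Lemma subFq_coord_inj y0 y1 z0 z1 : y0 \in K -> y1 \in K -> z0 \in K -> z1 \in K ->
  y0 + y1 * xi = z0 + z1 * xi -> y0 = z0 /\ y1 = z1.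
Proof.
move=> y0K y1K z0K z1K eq_yz.
suff y1z1 : y1 = z1 by split=> //; move: eq_yz; rewrite y1z1 => /addIr.
apply/eqP; apply: contraNT xi_notin => neq_y1z1.
rewrite -subr_eq0 in neq_y1z1.
have -> : xi = (z0 - y0) / (y1 - z1).
  apply: (mulIf neq_y1z1); rewrite divfK //; apply/eqP; rewrite -subr_eq0.
  by apply/eqP; transitivity ((y0 + y1 * xi) - (z0 + z1 * xi)); [ring | rewrite eq_yz subrr].
by rewrite rpred_div ?rpredB.
Qed.

Lemma subFq_coord_surj : #|K| = q -> #|F| = (q ^ 2)%N ->
  forall b, exists b0 b1, [/\ b0 \in K, b1 \in K & b = b0 + b1 * xi].
Proof.
move=> cardK cardF b.
pose coord (u : F * F) := u.1 + u.2 * xi.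
have coord_inj : {in setX K K &, injective coord}.
  move=> [y0 y1] [z0 z1]; rewrite !in_setX => /andP[y0K y1K] /andP[z0K z1K] eq_yz.
  by have [-> ->] := subFq_coord_inj y0K y1K z0K z1K eq_yz.
have : b \in coord @: setX K K.
  suff -> : coord @: setX K K = [set: F] by rewrite inE.
  apply/eqP; rewrite eqEcard subsetT /= cardsT (card_in_imset coord_inj).
  by rewrite cardsX cardK cardF mulnn.
by case/imsetP=> -[b0 b1]; rewrite in_setX => /andP[b0K b1K] ->; exists b0, b1.
Qed.

Variables theta0 theta1 : F.
Hypotheses (theta0K : theta0 \in K) (theta1K : theta1 \in K).
Local Notation theta := (theta0 + theta1 * xi).
Hypothesis theta_neq0 : theta != 0.

Lemma in_subFq_span y0 y1 : y0 \in K -> y1 \in K ->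
  [exists t in K, y0 + y1 * xi == t * theta] =
  (theta1 * y0 - theta0 * y1 == 0).
Proof.
move=> y0K y1K; apply/existsP/idP => [[t /andP[tK /eqP]]|det0].
  rewrite mulrDr mulrA => eq_y.
  have [-> ->] := subFq_coord_inj y0K y1K (rpredM tK theta0K) (rpredM tK theta1K) eq_y.
  by apply/eqP; ring.
have [theta1_0|theta1_neq0] := eqVneq theta1 0.
  have theta0_neq0 : theta0 != 0.
    by apply: contraNneq theta_neq0 => ->; rewrite theta1_0 mul0r addr0.
  move: det0; rewrite theta1_0 mul0r sub0r oppr_eq0 mulf_eq0 (negPf theta0_neq0).
  move=> /eqP ->; exists (y0 / theta0); rewrite rpred_div //=.
  by rewrite !mul0r !addr0 divfK.
exists (y1 / theta1); rewrite rpred_div //=.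
have -> : y0 = theta0 * y1 / theta1.
  have det0' : theta1 * y0 = theta0 * y1 by apply/eqP; rewrite -subr_eq0 det0.
  by rewrite -det0' mulrC mulKf.
by apply/eqP; field.
Qed.

Variables f f0 f1 : F -> F.
Hypotheses (f0K : forall x, f0 x \in K) (f1K : forall x, f1 x \in K).
Hypothesis f_coord : forall x, f x = f0 x + f1 x * xi.

Lemma card_meet_U_theta_fibre a b b0 b1 : b0 \in K -> b1 \in K -> b = b0 + b1 * xi ->
  #|meet f (U_theta q theta) (inl (a, b))| =
  #|[set x | theta1 * f0 x - theta0 * f1 x == theta1 * b0 - theta0 * b1]|.
Proof.
move=> b0K b1K ->; rewrite card_meet_U_theta_affine; apply: eq_card => x; rewrite !inE.
have -> : f x - (b0 + b1 * xi) = (f0 x - b0) + (f1 x - b1) * xi by rewrite f_coord; ring.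
rewrite in_subFq_span ?rpredB // -[RHS]subr_eq0; congr (_ == 0); ring.
Qed.

Hypothesis cardF : #|F| = (q ^ 2)%N.
Hypothesis card_fibre : forall c, c \in K ->
  #|[set x | theta1 * f0 x - theta0 * f1 x == c]| = (if c != 0 then q.+1 else 1%N).

Lemma card_subFq : #|K| = q.
Proof.
apply: card_fibres_square card_fibre cardF; rewrite ?rpred0 // => x.
by rewrite rpredB ?rpredM.
Qed.

Lemma U_theta_unital : is_unital f q (U_theta q theta).
Proof.
split=> [|[[a b]|[a|]]]; first by rewrite card_U_theta // card_subFq cardF -expnSr.
- have [b0 [b1 [b0K b1K bE]]] := subFq_coord_surj card_subFq cardF b.
  rewrite (card_meet_U_theta_fibre a b0K b1K bE) card_fibre ?rpredB ?rpredM //.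
  by case: ifP; [right | left].
- by right; rewrite card_meet_U_theta_vertical // card_subFq.
- by left; rewrite meet_U_theta_infinity cards1.
Qed.

Lemma tangent_U_thetaP a b b0 b1 : b0 \in K -> b1 \in K -> b = b0 + b1 * xi ->
  tangent f (U_theta q theta) (inl (a, b)) <-> b0 * theta1 - b1 * theta0 = 0.
Proof.
move=> b0K b1K bE; rewrite /tangent (card_meet_U_theta_fibre a b0K b1K bE).
rewrite card_fibre ?rpredB ?rpredM // (mulrC b0) (mulrC b1).
have [-> //|det_neq0] := eqVneq (theta1 * b0 - theta0 * b1) 0.
split=> [[q0] | /eqP]; last by rewrite (negPf det_neq0).
by move: pcharq; rewrite q0.
Qed.

End FixedSubfield.

Theorem proposition2p2 (q : nat) (F : finFieldType)
  (Hq : exists p k : nat, [/\ prime p, (0 < k)%N & q = (p ^ k)%N])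
  (Hodd : odd q) (HF : #|F| = (q ^ 2)%N)
  (xi : F) (Hxi : xi \notin subFq q F)
  (f f0 f1 : F -> F) (Hplanar : planar f)
  (Hf0 : forall x, f0 x \in subFq q F) (Hf1 : forall x, f1 x \in subFq q F)
  (Hf : forall x, f x = f0 x + f1 x * xi)
  (theta theta0 theta1 : F) (Htheta : theta != 0)
  (Ht0 : theta0 \in subFq q F) (Ht1 : theta1 \in subFq q F)
  (Htheta_dec : theta = theta0 + theta1 * xi)
  (Hcount : forall c, c \in subFq q F ->
     #|[set x : F | theta1 * f0 x - theta0 * f1 x == c]| =
       (if c != 0 then q.+1 else 1%N)) :
  is_unital f q (U_theta q theta) /\
  (forall a b b0 b1 : F, b0 \in subFq q F -> b1 \in subFq q F -> b = b0 + b1 * xi ->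
     (tangent f (U_theta q theta) (inl (a, b)) <-> b0 * theta1 - b1 * theta0 = 0)).
Proof.
have pcharq : [pchar F].-nat q.
  have [p [k [p_pr k_gt0 qE]]] := Hq.
  have pcharp : p \in [pchar F] by apply: (card_finPcharP (n := k * 2)); rewrite // HF qE expnM.
  by rewrite qE pnatX pnatE ?pcharp.
subst theta; split; first exact: (U_theta_unital pcharq Hxi Ht0 Ht1 Htheta Hf0 Hf1 Hf HF Hcount).
by move=> a b b0 b1; exact: (tangent_U_thetaP pcharq Hxi Ht0 Ht1 Htheta Hf0 Hf1 Hf Hcount).
Qed.
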